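(* Let $d\ge 2$ and $\ell\ge 2$. The subKautz digraph $sK(d,\ell)$ has the same girth as the cyclic Kautz digraph $CK(d,\ell+1)$; in particular its girth is at least the smallest positive integer $k$ such that $\ell+1\not\equiv 1\pmod k$ (equivalently, $k\nmid \ell$).
   Context: SubKautz digraph $sK(d,\ell)$: vertices $x_1\ldots x_\ell\in\mathbb Z_{d+1}^\ell$ with $x_i\neq x_{i+1}$; arcs $x_1\ldots x_\ell\to x_2\ldots x_\ell x_{\ell+1}$ for $x_{\ell+1}\neq x_1,x_\ell$. Cyclic Kautz digraph $CK(d,m)$: vertices $x_1\ldots x_m\in\mathbb Z_{d+1}^m$ with $x_i\neq x_{i+1}$ ($1\le i\le m-1$) and $x_m\neq x_1$; arcs $x_1\ldots x_m\to x_2\ldots x_m y$ for $y\neq x_2,x_m$. The girth is the length of a shortest directed cycle. *)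

From mathcomp Require Import all_boot.
Set Implicit Arguments. Unset Strict Implicit. Unset Printing Implicit Defensive.

(* Symbols are elements of Z_{d+1}, represented as 'I_(d.+1); words are
   sequences of symbols. Only equality of symbols matters. *)
Definition sym (d : nat) := 'I_d.+1.

Definition sK_vertex (d l : nat) (x : seq (sym d)) : bool :=
  (size x == l) &&
  all (fun i => nth ord0 x i != nth ord0 x i.+1) (iota 0 l.-1).
Arguments sK_vertex : clear implicits.

Definition sK_arc (d l : nat) (x y : seq (sym d)) : bool :=
  [exists z : sym d,
     [&& z != nth ord0 x 0, z != nth ord0 x l.-1 & y == rcons (behead x) z]].
Arguments sK_arc : clear implicits.

Definition CK_vertex (d m : nat) (x : seq (sym d)) : bool :=
  sK_vertex d m x && (nth ord0 x m.-1 != nth ord0 x 0).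
Arguments CK_vertex : clear implicits.

Definition CK_arc (d m : nat) (x y : seq (sym d)) : bool :=
  [exists z : sym d,
     [&& z != nth ord0 x 1, z != nth ord0 x m.-1 & y == rcons (behead x) z]].
Arguments CK_arc : clear implicits.

Definition is_dcycle (T : eqType) (V : pred T) (E : rel T) (p : seq T) : bool :=
  [&& 0 < size p, all V p, uniq p & cycle E p].

Definition is_girth (T : eqType) (V : pred T) (E : rel T) (g : nat) : Prop :=
  (exists2 p, is_dcycle V E p & size p = g) /\
  (forall p, is_dcycle V E p -> g <= size p).

Lemma exists_nondiv (n : nat) : exists k, (0 < k) && ~~ (k %| n.+1).
Proof. exists n.+2; rewrite /= gtnNdvd //. Qed.

(* For l >= 1: the smallest positive integer k with ~~ (k %| l),
   equivalently l+1 <> 1 (mod k). *)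
Definition min_nondiv (l : nat) : nat := ex_minn (exists_nondiv l.-1).

From mathcomp Require Import all_boot zify.
From Stdlib Require Import Classical_Prop.
From Stdlib Require Wf_nat.
Set Implicit Arguments. Unset Strict Implicit. Unset Printing Implicit Defensive.

(* CK(d,l+1) is the line digraph of sK(d,l): an arc x -> rcons (behead x) z
   of sK(d,l) is the vertex rcons x z of CK(d,l+1), and two consecutive arcs
   form an arc of CK(d,l+1).  Hence closed walks of the two digraphs
   correspond length for length, and so do their shortest directed cycles.
   Along a closed walk of length k in sK(d,l), the first letters w_n of the
   visited vertices form a k-periodic word in which the letter appended at
   step n is w_(n+l); the arc condition x_(l+1) <> x_1 reads
   w_(n+l) <> w_n, so k cannot divide l. *)

Lemma cycle_nthP (T : Type) (e : rel T) x0 p : 0 < size p ->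
  reflect (forall i, i < size p -> e (nth x0 p i) (nth x0 p (i.+1 %% size p)))
          (cycle e p).
Proof.
case: p => // x s _; rewrite /cycle.
have nth_cycle i : i < size (x :: s) ->
    nth x0 (x :: rcons s x) i = nth x0 (x :: s) i /\
    nth x0 (rcons s x) i = nth x0 (x :: s) (i.+1 %% size (x :: s)).
  move=> /= lt_i; split.
    by case: i lt_i => [|i] //= lt_i; rewrite nth_rcons ltnS in lt_i *; rewrite lt_i.
  rewrite nth_rcons /=; case: ltnP => [lt_is|le_si]; first by rewrite modn_small.
  have -> : i = size s by lia.
  by rewrite eqxx modnn.
apply: (iffP (pathP x0)) => E i; rewrite ?size_rcons => lt_i;
  have [nth_l nth_r] := nth_cycle i lt_i.
  by rewrite -nth_l -nth_r; apply: E; rewrite size_rcons.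
by rewrite nth_l nth_r; apply: E.
Qed.

Lemma least_nat_witness (P : nat -> Prop) :
  (exists n, P n) -> exists n, P n /\ forall m, P m -> n <= m.
Proof.
move=> exP; have [n [[Pn least_n] _]] :=
  @Wf_nat.dec_inh_nat_subset_has_unique_least_element P (fun n => classic (P n)) exP.
by exists n; split=> // m /least_n/leP.
Qed.

Section ClosedWalks.
Variables (T : eqType) (V : pred T) (E : rel T).

Definition closed_walk (p : seq T) : bool := [&& 0 < size p, all V p & cycle E p].

Lemma closed_walkP x0 p : closed_walk p <->
  [/\ 0 < size p, forall i, i < size p -> V (nth x0 p i)
    & forall i, i < size p -> E (nth x0 p i) (nth x0 p (i.+1 %% size p))].
Proof.
split=> [/and3P[p_gt0 /(all_nthP x0) Vp /(cycle_nthP E x0 p_gt0) Ep] //|].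
by case=> p_gt0 /(all_nthP x0) Vp /(cycle_nthP E x0 p_gt0) Ep; apply/and3P.
Qed.

Lemma dcycle_closed_walk p : is_dcycle V E p -> closed_walk p.
Proof. by case/and4P=> *; apply/and3P. Qed.

Lemma closed_walk_dcycle p :
  closed_walk p -> exists2 q, is_dcycle V E q & size q <= size p.
Proof.
case: p => [|x s] /and3P[// _ Vxs]; rewrite /cycle rcons_path => /andP[Es].
case: (shortenP Es) => q Eq Uxq sub_qs Eqx.
have sub_xq : {subset x :: q <= x :: s}.
  by move=> y; rewrite !inE => /predU1P[->|/sub_qs->]; rewrite ?eqxx ?orbT.
exists (x :: q); last exact: uniq_leq_size.
apply/and4P; split=> //; last by rewrite /cycle rcons_path Eq.
by apply/allP=> y /sub_xq/(allP Vxs).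
Qed.

Lemma is_girth_least_closed_walk g :
  (exists2 p, closed_walk p & size p = g) ->
  (forall p, closed_walk p -> g <= size p) -> is_girth V E g.
Proof.
case=> p walk_p <- least_g; split=> [|q /dcycle_closed_walk]; last exact: least_g.
have [q dcycle_q le_qp] := closed_walk_dcycle walk_p.
by exists q => //; apply/eqP; rewrite eqn_leq le_qp least_g ?dcycle_closed_walk.
Qed.

End ClosedWalks.

Section SubKautz.
Variable d : nat.
Local Notation word := (seq (sym d)).
Local Notation head0 := (head (@ord0 d)).
Local Notation last0 := (last (@ord0 d)).

Lemma sK_vertexE m (x : word) :
  sK_vertex d m x = (size x == m) && sorted (fun a b => a != b) x.
Proof.
rewrite /sK_vertex; case: eqP => //= <-.
apply/allP/(sortedP ord0) => neq_x i.
  by move=> lt_i; apply: neq_x; rewrite mem_iota ltn_predRL.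
by rewrite mem_iota ltn_predRL => /andP[_ lt_i]; apply: neq_x.
Qed.

Lemma CK_vertexE m (x : word) :
  CK_vertex d m x = sK_vertex d m x && (last0 x != head0 x).
Proof.
rewrite /CK_vertex; case x_sK: sK_vertex => //=.
by move: x_sK; rewrite sK_vertexE => /andP[/eqP <- _]; rewrite nth_last nth0.
Qed.

Lemma sK_arcP m (x y : word) : size x = m ->
  reflect (exists z, [/\ z != head0 x, z != last0 x & y = rcons (behead x) z])
          (sK_arc d m x y).
Proof.
move=> <-; rewrite /sK_arc nth_last nth0.
apply: (iffP existsP) => [[z /and3P[? ? /eqP]]|[z [? ? ->]]]; first by exists z.
by exists z; apply/and3P.
Qed.

Lemma CK_arcP m (x y : word) : size x = m ->
  reflect (exists z, [/\ z != head0 (behead x), z != last0 x & y = rcons (behead x) z])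
          (CK_arc d m x y).
Proof.
move=> <-; rewrite /CK_arc nth_last -nth_behead nth0.
apply: (iffP existsP) => [[z /and3P[? ? /eqP]]|[z [? ? ->]]]; first by exists z.
by exists z; apply/and3P.
Qed.

Variable l : nat.
Hypothesis l_gt0 : 0 < l.

Lemma CK_vertex_of_sK_arc x y :
  sK_vertex d l x -> sK_arc d l x y -> CK_vertex d l.+1 (head0 x :: y).
Proof.
rewrite sK_vertexE => /andP[/eqP size_x sorted_x] /(sK_arcP _ size_x)[z [zx zl ->]].
case: x size_x sorted_x zx zl => [|a s] /= size_x; first by move: l_gt0; rewrite -size_x.
move=> sorted_s za zl; rewrite CK_vertexE sK_vertexE /= size_rcons size_x eqxx.
by rewrite rcons_path sorted_s last_rcons eq_sym zl za.
Qed.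

Lemma CK_arc_of_sK_arc a y t :
  sK_vertex d l y -> sK_arc d l y t -> CK_arc d l.+1 (a :: y) (head0 y :: t).
Proof.
rewrite sK_vertexE => /andP[/eqP size_y _] /(sK_arcP _ size_y)[z [zy zl ->]].
apply/CK_arcP; first by rewrite /= size_y.
by exists z; case: y size_y zy zl => [|b s] /= size_y; first by move: l_gt0; rewrite -size_y.
Qed.

Lemma sK_vertex_behead x : CK_vertex d l.+1 x -> sK_vertex d l (behead x).
Proof.
rewrite CK_vertexE sK_vertexE => /andP[/andP[/eqP size_x sorted_x] _].
by rewrite sK_vertexE size_behead size_x eqxx; case: x {size_x} sorted_x => //= a s /path_sorted.
Qed.

Lemma sK_arc_behead x y :
  size x = l.+1 -> CK_arc d l.+1 x y -> sK_arc d l (behead x) (behead y).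
Proof.
move=> size_x /(CK_arcP _ size_x)[z [zx zl ->]].
apply/sK_arcP; first by rewrite size_behead size_x.
exists z; case: x size_x zx zl => [|a [|b s]] //= size_x; lia.
Qed.

Local Notation sK_walk := (closed_walk (sK_vertex d l) (sK_arc d l)).
Local Notation CK_walk := (closed_walk (CK_vertex d l.+1) (CK_arc d l.+1)).

Lemma CK_walk_of_sK_walk p : sK_walk p ->
  CK_walk (mkseq (fun i => head0 (nth [::] p i) :: nth [::] p (i.+1 %% size p)) (size p)).
Proof.
move/(closed_walkP _ _ [::]) => [p_gt0 Vp Ep]; apply/(closed_walkP _ _ [::]); rewrite size_mkseq.
have lt_succ i : i.+1 %% size p < size p by exact: ltn_pmod.
split=> // i lt_i; rewrite !nth_mkseq //.
  exact: CK_vertex_of_sK_arc (Vp _ lt_i) (Ep _ lt_i).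
exact: CK_arc_of_sK_arc (Vp _ (lt_succ i)) (Ep _ (lt_succ i)).
Qed.

Lemma sK_walk_of_CK_walk p : CK_walk p -> sK_walk (map behead p).
Proof.
move/(closed_walkP _ _ [::]) => [p_gt0 Vp Ep]; apply/(closed_walkP _ _ [::]); rewrite size_map.
split=> // i lt_i; rewrite !(nth_map [::]) ?ltn_pmod //; first exact/sK_vertex_behead/Vp.
apply: sK_arc_behead (Ep _ lt_i).
by move: (Vp _ lt_i); rewrite CK_vertexE sK_vertexE => /andP[/andP[/eqP]].
Qed.

Lemma sK_walk_size_ndvd p : sK_walk p -> ~~ (size p %| l).
Proof.
move/(closed_walkP _ _ [::]) => [k_gt0 Vp Ep]; set k := size p in k_gt0 Vp Ep *.
pose P n := nth [::] p (n %% k).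
have size_P i : size (P i) = l.
  by move: (Vp _ (ltn_pmod i k_gt0)); rewrite sK_vertexE => /andP[/eqP].
have arc_P i : exists z, [/\ z != head0 (P i), z != last0 (P i)
                          & P i.+1 = rcons (behead (P i)) z].
  have mod_succ : (i %% k).+1 %% k = i.+1 %% k by rewrite -addn1 modnDml addn1.
  by apply/(sK_arcP _ (size_P i)); rewrite /P -mod_succ; apply: Ep; rewrite ltn_pmod.
have letter_P j : j < l -> forall i, nth ord0 (P i) j = head0 (P (i + j)).
  elim: j => [|j IH] lt_j i; first by rewrite addn0.
  have [z [_ _ P_succ]] := arc_P i.
  have -> : nth ord0 (P i) j.+1 = nth ord0 (P i.+1) j.
    by rewrite P_succ nth_rcons size_behead size_P -nth_behead ifT //; lia.
  by rewrite IH ?addSnnS //; lia.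
have shift_P i : head0 (P (i + l)) != head0 (P i).
  have [z [z_head _ P_succ]] := arc_P i.
  have -> : i + l = i.+1 + l.-1 by lia.
  by rewrite -letter_P ?ltn_predL // P_succ nth_rcons size_behead size_P ltnn eqxx.
apply/negP => /eqP l_mod_k; have := shift_P 0.
by rewrite add0n /P l_mod_k mod0n eqxx.
Qed.

Lemma sK_walk_of_word (w : nat -> sym d) k : 0 < k ->
  (forall n, w (n + k) = w n) -> (forall n, w n.+1 != w n) ->
  (forall n, w (n + l) != w n) ->
  sK_walk (mkseq (fun i => mkseq (fun j => w (i + j)) l) k).
Proof.
move=> k_gt0 w_per w_succ w_shift.
have w_mod n : w (n %% k) = w n.
  rewrite [in RHS](divn_eq n k) addnC; elim: (n %/ k) => [|q IH]; first by rewrite mul0n addn0.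
  by rewrite mulSn addnCA addnC w_per.
apply/(closed_walkP _ _ [::]); rewrite size_mkseq; split=> // i lt_i.
  rewrite nth_mkseq // sK_vertexE size_mkseq eqxx /=.
  apply/(sortedP ord0) => j; rewrite size_mkseq => lt_j.
  by rewrite !nth_mkseq 1?addnS 1?eq_sym ?w_succ //; apply: ltnW.
rewrite !nth_mkseq ?ltn_pmod //; apply/sK_arcP; first exact: size_mkseq.
exists (w (i + l)); split.
- by rewrite -nth0 nth_mkseq ?addn0.
- rewrite -nth_last size_mkseq nth_mkseq ?ltn_predL //.
  by have -> : i + l = (i + l.-1).+1 by lia.
apply: (@eq_from_nth _ ord0); first by rewrite size_rcons size_behead !size_mkseq prednK.
rewrite size_mkseq => j lt_j; rewrite nth_mkseq // -w_mod modnDml w_mod.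
rewrite nth_rcons size_behead size_mkseq; case: ltnP => [lt_jl|le_lj].
  by rewrite nth_behead nth_mkseq ?addSnnS //; lia.
have -> : j = l.-1 by lia.
by rewrite eqxx; congr w; lia.
Qed.

(* w is a proper 3-colouring of the (l+1)-cycle; with period l+1,
   w_(n+l) = w_(n-1), so both conditions of sK_walk_of_word are adjacency. *)
Lemma sK_walk_exists : 2 <= d -> exists p, sK_walk p.
Proof.
move=> d_ge2; pose color m := if m == l then 2 else odd m.
have color_lt m : color m < d.+1 by rewrite /color; case: (_ == _); lia.
pose w n : sym d := inord (color (n %% l.+1)).
have w_per n : w (n + l.+1) = w n by rewrite /w modnDr.
have w_succ n : w n.+1 != w n.
  apply/negP => /eqP/(congr1 (@nat_of_ord _)); rewrite !inordK // -addn1 -modnDml.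
  have : n %% l.+1 < l.+1 by rewrite ltn_pmod.
  move: (n %% l.+1) => m lt_m; rewrite /color.
  have [->|ne_ml] := eqVneq m l; first by rewrite addn1 (modnn l.+1) eq_sym (gtn_eqF l_gt0).
  rewrite modn_small addn1; last lia.
  by case: ifP => _ /=; case: (odd m).
exists (mkseq (fun i => mkseq (fun j => w (i + j)) l) l.+1).
by apply: sK_walk_of_word => // n; rewrite eq_sym -{1}w_per addnS.
Qed.

End SubKautz.

Lemma min_nondiv_le l k : 0 < l -> 0 < k -> ~~ (k %| l) -> min_nondiv l <= k.
Proof.
move=> l_gt0 k_gt0 ndvd_kl; rewrite /min_nondiv; case: ex_minnP => m _; apply.
by rewrite prednK // k_gt0.
Qed.

Theorem mainTheorem11 (d l : nat) (hd : 2 <= d) (hl : 2 <= l) :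
  exists g : nat,
    [/\ is_girth (sK_vertex d l) (sK_arc d l) g,
        is_girth (CK_vertex d l.+1) (CK_arc d l.+1) g
      & min_nondiv l <= g].
Proof.
have l_gt0 : 0 < l by apply: leq_trans hl.
have [p0 walk_p0] := sK_walk_exists l_gt0 hd.
have [_ [[p walk_p <-] least_p]] := @least_nat_witness
  (fun n => exists2 p, closed_walk (sK_vertex d l) (sK_arc d l) p & size p = n)
  (ex_intro _ _ (ex_intro2 _ _ p0 walk_p0 erefl)).
have min_p q : closed_walk (sK_vertex d l) (sK_arc d l) q -> size p <= size q.
  by move=> walk_q; apply: least_p; exists q.
exists (size p); split.
- by apply: is_girth_least_closed_walk => //; exists p.
- apply: is_girth_least_closed_walk => [|q /(sK_walk_of_CK_walk l_gt0)/min_p].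
    by eexists; [exact: CK_walk_of_sK_walk walk_p | rewrite size_mkseq].
  by rewrite size_map.
- apply: min_nondiv_le => //; last exact: sK_walk_size_ndvd walk_p.
  by case/and3P: walk_p.
Qed.
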